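(* Let $\gamma>0$. There exists a sequence of positive numbers $(\beta_n)_{n\ge1}$ such that, with the convention $\beta_0=0$, $$\sup_{n\ge1}\Big\{(1-\nu_n)\Big(p_n+\frac{|q_n|}{\beta_n}+|q_{n-1}|\,\beta_{n-1}\Big)\Big\}<1 .$$
   Context: For $\gamma>0$ and integers $n\ge1$ define $\nu_n=\nu_n(\gamma)=(-1)^n\frac{\Gamma(2\gamma)\Gamma(n+\gamma)}{\Gamma(\gamma)\Gamma(n+2\gamma)}$, $p_n=p_n(\gamma)=\frac{2n(n-1)+(6n-4)\gamma+6\gamma^2}{(2n+3\gamma)(2n+3\gamma-2)}=\frac12+\frac{-\gamma+\frac32\gamma^2}{(2n+3\gamma)(2n+3\gamma-2)}$, $q_n=q_n(\gamma)=-\frac{1}{2n+3\gamma}\sqrt{\frac{(n+3\gamma-1)(n+1)(n+\gamma)}{(2n+3\gamma+1)(2n+3\gamma-1)}}$ (for $n\ge1$; the term with $q_0$ is multiplied by $\beta_0=0$ and hence absent). *)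

From Stdlib Require Import Reals.
Open Scope R_scope.

(* Gamma(2g) Gamma(n+g) / (Gamma(g) Gamma(n+2g)) written out via the
   functional equation Gamma(x+1) = x Gamma(x):
   = prod_{k=0}^{n-1} (g+k)/(2g+k).  (Stdlib has no Gamma function.) *)
Fixpoint gamma_ratio (g : R) (n : nat) : R :=
  match n with
  | O => 1
  | S m => gamma_ratio g m * ((g + INR m) / (2 * g + INR m))
  end.

Definition nu (g : R) (n : nat) : R := (-1) ^ n * gamma_ratio g n.

Definition p (g : R) (n : nat) : R :=
  let N := INR n in
  (2 * N * (N - 1) + (6 * N - 4) * g + 6 * g ^ 2)
  / ((2 * N + 3 * g) * (2 * N + 3 * g - 2)).

Definition q (g : R) (n : nat) : R :=
  let N := INR n in
  - (1 / (2 * N + 3 * g)) *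
  sqrt ((N + 3 * g - 1) * (N + 1) * (N + g)
        / ((2 * N + 3 * g + 1) * (2 * N + 3 * g - 1))).

From Stdlib Require Import Reals Lra Lia Psatz.
Open Scope R_scope.

(* Let s_n := 1/(1 - nu_n) - p_n (the slack) and beta_n := 2|q_n|/s_n.  Then the n-th
   term equals (1 - nu_n)(p_n + s_n/2 + 2 q_{n-1}^2/s_{n-1}), so it suffices that s_n is
   bounded below and that 4 q_m^2 <= (50/51) s_m s_{m+1}.  Since nu_n alternates in sign
   with |nu_n| <= 1/2 decreasing, s_n >= 1/2 - e_n for even n and
   s_n >= 1/(1 + |nu_3|) - 1/2 - e_n for odd n >= 3, where e_n = O(1/n^2) bounds p_n - 1/2;
   meanwhile 4 q_n^2 <= (u^2 - 1)/(2 u^3) with u = 2n + 3 gamma.  Both bounds are monotone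
   in n, so for n >= 3 the claim reduces to n = 3, a polynomial inequality in gamma (tight
   only as gamma -> 0, with ratio 35/36); n = 1, 2 are checked directly. *)

Lemma Rdiv_le_cross (a b c d : R) : 0 < b -> 0 < d -> a * d <= c * b -> a / b <= c / d.
Proof.
  intros Hb Hd H. apply (Rmult_le_reg_r (b * d)); [nra|].
  replace (a / b * (b * d)) with (a * d) by (field; lra).
  replace (c / d * (b * d)) with (c * b) by (field; lra).
  exact H.
Qed.

Lemma scaled_sum_le (a P s Y sigma : R) :
  1 / 2 <= a -> 0 <= sigma <= s -> Y <= 25 / 51 * s -> a * (P + s) = 1 ->
  a * (P + s / 2 + Y) <= 1 - sigma / 204.
Proof.
  intros Ha Hs HY Hid.
  assert (a * Y <= a * (25 / 51 * s)) by (apply Rmult_le_compat_l; lra).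
  assert (sigma / 2 <= a * s) by nra.
  nra.
Qed.

Lemma neg1_pow_cases (n : nat) :
  ((-1) ^ n = 1 /\ (-1) ^ S n = -1) \/ ((-1) ^ n = -1 /\ (-1) ^ S n = 1).
Proof.
  induction n as [|n [[H _]|[H _]]]; simpl; [left | right | left]; try rewrite H; lra.
Qed.

Definition q_majorant (u : R) : R := (u ^ 2 - 1) / (2 * u ^ 3).

Lemma q_majorant_antitone (u v : R) : 2 <= u <= v -> q_majorant v <= q_majorant u.
Proof.
  intros Huv. unfold q_majorant.
  apply Rdiv_le_cross; try (apply Rmult_lt_0_compat; [lra | apply pow_lt; lra]).
  assert (4 * v ^ 2 <= u ^ 2 * v ^ 2) by (apply Rmult_le_compat_r; [apply pow2_ge_0 | nra]).
  assert (0 <= (v - u) * (u ^ 2 * v ^ 2 - (v ^ 2 + u * v + u ^ 2))) by (apply Rmult_le_pos; nra).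
  nra.
Qed.

Lemma q_majorant_le_inv (u : R) : 0 < u -> q_majorant u <= 1 / (2 * u).
Proof.
  intros Hu. unfold q_majorant.
  apply Rdiv_le_cross; try (apply Rmult_lt_0_compat; [lra | try apply pow_lt; lra]).
  nra.
Qed.

Lemma q_numerator_le (g N : R) : 0 <= g -> 2 <= N ->
  8 * (N + 3 * g - 1) * (N + 1) * (N + g) * (2 * N + 3 * g) <= ((2 * N + 3 * g) ^ 2 - 1) ^ 2.
Proof.
  (* With N = t + 2 the difference is a polynomial in g, t whose only negative monomials,
     -96 g and -80 g t, are absorbed by the squares below. *)
  intros Hg HN. replace N with ((N - 2) + 2) by ring. set (t := N - 2).
  assert (Ht : 0 <= t) by (unfold t; lra). clearbody t.
  assert (0 <= g * (g - 2/5) ^ 2) by (apply Rmult_le_pos; [lra | apply pow2_ge_0]).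
  assert (0 <= t * (g - 5/21) ^ 2) by (apply Rmult_le_pos; [lra | apply pow2_ge_0]).
  assert (0 <= (g - 272/945) ^ 2) by apply pow2_ge_0.
  assert (0 <= g * t ^ 3) by (apply Rmult_le_pos; [lra | apply pow_le; lra]).
  assert (0 <= g ^ 3 * t) by (apply Rmult_le_pos; [apply pow_le; lra | lra]).
  assert (0 <= g ^ 2 * t ^ 2) by (apply Rmult_le_pos; apply pow2_ge_0).
  assert (0 <= g ^ 4) by (apply pow_le; lra).
  assert (0 <= t ^ 2) by apply pow2_ge_0.
  nra.
Qed.

Lemma q_majorant_3_poly (g : R) : 0 <= g ->
  51 * (3 * g + 5) * (3 * g + 7) * (3 * g + 4) ^ 2 * (3 * g + 2)
  <= 900 * (g + 1) * (g + 2) * (g + 4) * (6 * g ^ 3 + 35 * g ^ 2 + 38 * g + 8).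
Proof.
  intros Hg.
  assert (0 <= g ^ 2) by (apply pow_le; lra).
  assert (0 <= g ^ 3) by (apply pow_le; lra).
  assert (0 <= g ^ 4) by (apply pow_le; lra).
  assert (0 <= g ^ 5) by (apply pow_le; lra).
  assert (0 <= g ^ 6) by (apply pow_le; lra).
  nra.
Qed.

Definition den (g : R) (n : nat) : R := 2 * INR n + 3 * g.

Definition p_excess (g : R) (n : nat) : R := 3 / 2 * g ^ 2 / (den g n * (den g n - 2)).

Definition slack (g : R) (n : nat) : R := 1 / (1 - nu g n) - p g n.

Definition c_odd (g : R) : R := 1 / (1 + gamma_ratio g 3).

Definition beta_seq (g : R) (n : nat) : R :=
  match n with O => 0 | _ => 2 * Rabs (q g n) / slack g n end.

Section Bounds.
Variable g : R.
Hypothesis hg : 0 < g.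

Lemma gamma_ratio_factor_bounds (m : nat) : 0 < (g + INR m) / (2 * g + INR m) <= 1.
Proof.
  pose proof (pos_INR m).
  split; [apply Rdiv_lt_0_compat; lra|].
  rewrite <- (Rdiv_1_r 1). apply Rdiv_le_cross; lra.
Qed.

Lemma gamma_ratio_pos (n : nat) : 0 < gamma_ratio g n.
Proof.
  induction n as [|n IH]; simpl; [lra|].
  pose proof (gamma_ratio_factor_bounds n). nra.
Qed.

Lemma gamma_ratio_antitone (m n : nat) :
  (m <= n)%nat -> gamma_ratio g n <= gamma_ratio g m.
Proof.
  induction 1 as [|n _ IH]; [lra|]. simpl.
  pose proof (gamma_ratio_factor_bounds n). pose proof (gamma_ratio_pos n). nra.
Qed.

Lemma gamma_ratio_le_half (n : nat) : (1 <= n)%nat -> gamma_ratio g n <= 1 / 2.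
Proof.
  intro Hn. replace (1 / 2) with (gamma_ratio g 1) by (simpl; field; lra).
  now apply gamma_ratio_antitone.
Qed.

Lemma one_sub_nu_bounds (n : nat) : (1 <= n)%nat -> 1 / 2 <= 1 - nu g n <= 3 / 2.
Proof.
  intro Hn. pose proof (gamma_ratio_pos n). pose proof (gamma_ratio_le_half n Hn).
  unfold nu. destruct (neg1_pow_cases n) as [[-> _]|[-> _]]; lra.
Qed.

Lemma den_mono (m n : nat) : (m <= n)%nat -> den g m <= den g n.
Proof. intro Hmn. apply le_INR in Hmn. unfold den. lra. Qed.

Lemma den_ge (n : nat) : (1 <= n)%nat -> 2 + 3 * g <= den g n.
Proof.
  intro Hn. replace (2 + 3 * g) with (den g 1) by (unfold den; simpl; ring).
  now apply den_mono.
Qed.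

Lemma p_le_half_add_excess (n : nat) : (1 <= n)%nat -> p g n <= 1 / 2 + p_excess g n.
Proof.
  intro Hn. pose proof (den_ge n Hn).
  assert (Hp : p g n = 1 / 2 + p_excess g n - g / (den g n * (den g n - 2))).
  { unfold p, p_excess, den in *. field. split; lra. }
  assert (0 < g / (den g n * (den g n - 2))) by (apply Rdiv_lt_0_compat; nra).
  lra.
Qed.

Lemma p_excess_antitone (m n : nat) :
  (1 <= m)%nat -> (m <= n)%nat -> p_excess g n <= p_excess g m.
Proof.
  intros Hm Hmn. pose proof (den_ge m Hm). pose proof (den_mono m n Hmn).
  unfold p_excess. apply Rdiv_le_cross; try nra.
  apply Rmult_le_compat_l; [nra|]. apply Rmult_le_compat; lra.
Qed.

Lemma p_excess_le_sixth (n : nat) : (1 <= n)%nat -> p_excess g n <= 1 / 6.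
Proof. intro Hn. pose proof (den_ge n Hn). unfold p_excess. apply Rdiv_le_cross; nra. Qed.

Lemma slack_even_ge (n : nat) :
  (1 <= n)%nat -> (-1) ^ n = 1 -> 1 / 2 - p_excess g n <= slack g n.
Proof.
  intros Hn Hs. pose proof (gamma_ratio_pos n). pose proof (gamma_ratio_le_half n Hn).
  pose proof (p_le_half_add_excess n Hn).
  assert (1 <= 1 / (1 - gamma_ratio g n))
    by (rewrite <- (Rdiv_1_r 1) at 1; apply Rdiv_le_cross; lra).
  unfold slack, nu. rewrite Hs, Rmult_1_l. lra.
Qed.

Lemma slack_odd_ge (n : nat) :
  (3 <= n)%nat -> (-1) ^ n = -1 -> c_odd g - 1 / 2 - p_excess g n <= slack g n.
Proof.
  intros Hn Hs. pose proof (gamma_ratio_pos n). pose proof (gamma_ratio_pos 3).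
  pose proof (gamma_ratio_antitone 3 n Hn). pose proof (p_le_half_add_excess n ltac:(lia)).
  assert (c_odd g <= 1 / (1 + gamma_ratio g n)) by (unfold c_odd; apply Rdiv_le_cross; lra).
  unfold slack, nu. rewrite Hs.
  replace (1 - -1 * gamma_ratio g n) with (1 + gamma_ratio g n) by ring. lra.
Qed.

Lemma half_sub_p_excess_3 : 1 / 2 - p_excess g 3 = (g + 1) * (g + 4) / ((g + 2) * (3 * g + 4)).
Proof. unfold p_excess, den. simpl. field. lra. Qed.

Lemma c_odd_sub_p_excess_3 :
  c_odd g - 1 / 2 - p_excess g 3
  = (6 * g ^ 3 + 35 * g ^ 2 + 38 * g + 8) / ((3 * g + 2) * (3 * g + 6) * (3 * g + 4)).
Proof. unfold c_odd, p_excess, den. simpl. field. repeat split; nra. Qed.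

Lemma c_odd_excess_ge_sixth : 1 / 6 <= c_odd g - 1 / 2 - p_excess g 3.
Proof.
  rewrite c_odd_sub_p_excess_3. apply Rdiv_le_cross; [lra | nra |].
  assert (0 <= g ^ 3) by (apply pow_le; lra). nra.
Qed.

Lemma slack_ge_sixth (n : nat) : (2 <= n)%nat -> 1 / 6 <= slack g n.
Proof.
  intro Hn. destruct (neg1_pow_cases n) as [[Hs _]|[Hs _]].
  - pose proof (slack_even_ge n ltac:(lia) Hs). pose proof (p_excess_le_sixth n ltac:(lia)). lra.
  - assert (n <> 2%nat) by (intros ->; simpl in Hs; lra).
    pose proof (slack_odd_ge n ltac:(lia) Hs).
    pose proof (p_excess_antitone 3 n ltac:(lia) ltac:(lia)).
    pose proof c_odd_excess_ge_sixth. lra.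
Qed.

Lemma slack_1 : slack g 1 = 2 / (3 * (3 * g + 2)).
Proof. unfold slack, nu, p. simpl. field. lra. Qed.

Lemma slack_2 :
  slack g 2 = 6 * (3 * g ^ 3 + 10 * g ^ 2 + 8 * g + 2) / ((3 * g + 1) * (3 * g + 2) * (3 * g + 4)).
Proof. unfold slack, nu, p. simpl. field. repeat split; lra. Qed.

Lemma slack_ge_min (n : nat) : (1 <= n)%nat -> Rmin (slack g 1) (1 / 6) <= slack g n.
Proof.
  intro Hn. destruct (Nat.eq_dec n 1) as [->|Hn1]; [apply Rmin_l|].
  eapply Rle_trans; [apply Rmin_r | apply slack_ge_sixth; lia].
Qed.

Lemma slack_min_pos : 0 < Rmin (slack g 1) (1 / 6).
Proof. rewrite slack_1. apply Rmin_pos; [apply Rdiv_lt_0_compat |]; lra. Qed.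

Lemma slack_pos (n : nat) : (1 <= n)%nat -> 0 < slack g n.
Proof. intro Hn. pose proof (slack_ge_min n Hn). pose proof slack_min_pos. lra. Qed.

Lemma slack_mul_succ_ge (n : nat) : (3 <= n)%nat ->
  (1 / 2 - p_excess g 3) * (c_odd g - 1 / 2 - p_excess g 3) <= slack g n * slack g (S n).
Proof.
  intro Hn.
  pose proof (p_excess_le_sixth 3 ltac:(lia)). pose proof c_odd_excess_ge_sixth.
  pose proof (p_excess_antitone 3 n ltac:(lia) Hn).
  pose proof (p_excess_antitone 3 (S n) ltac:(lia) ltac:(lia)).
  destruct (neg1_pow_cases n) as [[Hs HSs]|[Hs HSs]].
  - pose proof (slack_even_ge n ltac:(lia) Hs). pose proof (slack_odd_ge (S n) ltac:(lia) HSs).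
    apply Rmult_le_compat; lra.
  - pose proof (slack_odd_ge n Hn Hs). pose proof (slack_even_ge (S n) ltac:(lia) HSs).
    rewrite Rmult_comm. apply Rmult_le_compat; lra.
Qed.

Lemma q_sq_eq (n : nat) : (1 <= n)%nat ->
  q g n ^ 2 =
  (INR n + 3 * g - 1) * (INR n + 1) * (INR n + g)
  / ((den g n + 1) * (den g n - 1) * den g n ^ 2).
Proof.
  intro Hn. pose proof (den_ge n Hn). apply le_INR in Hn. simpl in Hn.
  unfold q. fold (den g n). rewrite Rpow_mult_distr, pow2_sqrt.
  - unfold den in *. field. repeat split; lra.
  - apply Rlt_le, Rdiv_lt_0_compat; unfold den in *; repeat apply Rmult_lt_0_compat; lra.
Qed.

Lemma four_q_sq_le (n : nat) : (2 <= n)%nat -> 4 * q g n ^ 2 <= q_majorant (den g n).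
Proof.
  intro Hn. pose proof (den_ge n ltac:(lia)). rewrite q_sq_eq by lia. unfold q_majorant.
  assert (HN : 2 <= INR n) by (apply (le_INR 2) in Hn; simpl in Hn; lra).
  pose proof (q_numerator_le g (INR n) ltac:(lra) HN) as Hnum.
  fold (den g n) in Hnum. set (u := den g n) in *.
  replace (4 * _)
    with (8 * (INR n + 3 * g - 1) * (INR n + 1) * (INR n + g) * u / ((u ^ 2 - 1) * (2 * u ^ 3)))
    by (field; repeat split; nra).
  replace ((u ^ 2 - 1) / (2 * u ^ 3)) with ((u ^ 2 - 1) ^ 2 / ((u ^ 2 - 1) * (2 * u ^ 3)))
    by (field; split; nra).
  assert (0 < (u ^ 2 - 1) * (2 * u ^ 3))
    by (apply Rmult_lt_0_compat; [nra | apply Rmult_lt_0_compat; [lra | apply pow_lt; lra]]).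
  apply Rdiv_le_cross; try lra. now apply Rmult_le_compat_r; [lra |].
Qed.

Lemma q_majorant_3_le :
  51 / 50 * q_majorant (den g 3)
  <= (1 / 2 - p_excess g 3) * (c_odd g - 1 / 2 - p_excess g 3).
Proof.
  rewrite half_sub_p_excess_3, c_odd_sub_p_excess_3.
  replace (den g 3) with (3 * (g + 2)) by (unfold den; simpl; ring). unfold q_majorant.
  match goal with |- ?l <= ?r =>
    replace l with (51 * (3 * g + 5) * (3 * g + 7) / (2700 * (g + 2) ^ 3)) by (field; lra);
    replace r with ((g + 1) * (g + 4) * (6 * g ^ 3 + 35 * g ^ 2 + 38 * g + 8)
                    / (3 * (g + 2) ^ 2 * (3 * g + 4) ^ 2 * (3 * g + 2)))
      by (field; repeat split; lra)
  end.
  pose proof (q_majorant_3_poly g ltac:(lra)) as Hpoly.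
  apply (Rmult_le_compat_r (3 * (g + 2) ^ 2)) in Hpoly; [| nra].
  apply Rdiv_le_cross; [nra | repeat apply Rmult_lt_0_compat; try apply pow_lt; lra | nra].
Qed.

Lemma q_sq_le_slack (m : nat) : (1 <= m)%nat ->
  51 / 50 * (4 * q g m ^ 2) <= slack g m * slack g (S m).
Proof.
  intro Hm. destruct (Nat.eq_dec m 1) as [->|Hm1]; [|destruct (Nat.eq_dec m 2) as [->|Hm2]].
  - rewrite q_sq_eq, slack_1, slack_2 by lia.
    replace (den g 1) with (3 * g + 2) by (unfold den; simpl; ring). simpl INR.
    match goal with |- ?l <= ?r =>
      replace l with (204 * g / (25 * (3 * g + 1) * (3 * g + 2) ^ 2)) by (field; repeat split; lra);
      replace r with (4 * (3 * g ^ 3 + 10 * g ^ 2 + 8 * g + 2)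
                      / ((3 * g + 2) ^ 2 * (3 * g + 1) * (3 * g + 4)))
        by (field; repeat split; lra)
    end.
    apply Rdiv_le_cross; [nra | nra |].
    assert (0 <= g ^ 3) by (apply pow_le; lra). nra.
  - pose proof (four_q_sq_le 2 ltac:(lia)). pose proof (slack_ge_sixth 3 ltac:(lia)).
    pose proof (slack_pos 2 ltac:(lia)).
    assert (Hden : den g 2 = 3 * g + 4) by (unfold den; simpl; ring).
    pose proof (q_majorant_le_inv (den g 2) ltac:(lra)).
    assert (51 / 50 * (1 / (2 * den g 2)) <= slack g 2 / 6).
    { rewrite Hden, slack_2.
      match goal with |- ?l <= ?r =>
        replace l with (51 / (100 * (3 * g + 4))) by (field; lra);
        replace r with ((3 * g ^ 3 + 10 * g ^ 2 + 8 * g + 2)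
                        / ((3 * g + 1) * (3 * g + 2) * (3 * g + 4)))
          by (field; repeat split; lra)
      end.
      apply Rdiv_le_cross; [lra | nra |].
      assert (0 <= g ^ 3) by (apply pow_le; lra). nra. }
    nra.
  - pose proof (four_q_sq_le m ltac:(lia)).
    assert (Hden3 : 2 <= den g 3) by (pose proof (den_ge 3 ltac:(lia)); lra).
    pose proof (q_majorant_antitone (den g 3) (den g m)
                  (conj Hden3 (den_mono 3 m ltac:(lia)))).
    pose proof q_majorant_3_le. pose proof (slack_mul_succ_ge m ltac:(lia)). lra.
Qed.

Lemma beta_seq_pos (n : nat) : (1 <= n)%nat -> 0 < beta_seq g n.
Proof.
  intro Hn. destruct n as [|n]; [lia|]. simpl beta_seq.
  assert (Hq : 0 < q g (S n) ^ 2).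
  { rewrite q_sq_eq by lia. pose proof (den_ge (S n) Hn). pose proof (pos_INR (S n)).
    apply Rdiv_lt_0_compat; [repeat apply Rmult_lt_0_compat; unfold den in *; lra |].
    repeat apply Rmult_lt_0_compat; try apply pow_lt; lra. }
  rewrite <- pow2_abs in Hq. pose proof (Rabs_pos (q g (S n))). pose proof (slack_pos (S n) Hn).
  apply Rdiv_lt_0_compat; nra.
Qed.

Lemma q_div_beta_seq (n : nat) : (1 <= n)%nat -> Rabs (q g n) / beta_seq g n = slack g n / 2.
Proof.
  intro Hn. pose proof (beta_seq_pos n Hn). pose proof (slack_pos n Hn).
  destruct n as [|n]; [lia|]. simpl beta_seq in *.
  assert (Rabs (q g (S n)) <> 0) by (intro Hq; rewrite Hq in *; unfold Rdiv in *; lra).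
  field. lra.
Qed.

Lemma q_pred_mul_beta_seq_le (n : nat) : (1 <= n)%nat ->
  Rabs (q g (n - 1)) * beta_seq g (n - 1) <= 25 / 51 * slack g n.
Proof.
  intro Hn. pose proof (slack_pos n Hn).
  destruct n as [|[|m]]; [lia | simpl; lra |].
  replace (S (S m) - 1)%nat with (S m) by lia. simpl beta_seq.
  pose proof (slack_pos (S m) ltac:(lia)). pose proof (q_sq_le_slack (S m) ltac:(lia)).
  replace (Rabs (q g (S m)) * (2 * Rabs (q g (S m)) / slack g (S m)))
    with (2 * q g (S m) ^ 2 / slack g (S m)) by (rewrite <- pow2_abs; field; lra).
  rewrite <- (Rdiv_1_r (25 / 51 * _)). apply Rdiv_le_cross; nra.
Qed.

End Bounds.

Theorem propositionA2 (g : R) (hg : 0 < g) :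
  exists beta : nat -> R,
    beta 0%nat = 0 /\
    (forall n : nat, (1 <= n)%nat -> 0 < beta n) /\
    exists c : R, c < 1 /\
      forall n : nat, (1 <= n)%nat ->
        (1 - nu g n) *
          (p g n + Rabs (q g n) / beta n + Rabs (q g (n - 1)) * beta (n - 1)%nat)
        <= c.
Proof.
  pose proof (slack_min_pos g hg) as Hsigma.
  set (sigma := Rmin (slack g 1) (1 / 6)) in *.
  exists (beta_seq g). split; [reflexivity|]. split; [exact (beta_seq_pos g hg)|].
  exists (1 - sigma / 204). split; [lra|]. intros n Hn.
  rewrite (q_div_beta_seq g hg n Hn).
  apply scaled_sum_le.
  - apply one_sub_nu_bounds; assumption.
  - split; [lra | apply slack_ge_min; assumption].
  - apply q_pred_mul_beta_seq_le; assumption.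
  - pose proof (one_sub_nu_bounds g hg n Hn). unfold slack. field. lra.
Qed.
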